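(* For every $m\ge3$, the $m$-candidate plurality rule (score vector $(1,0,\dots,0)$) is dominated by some other $m$-candidate positional rule; indeed it is dominated both by the anti-plurality rule (score vector $(1,\dots,1,0)$) and by Borda's rule (score vector $w_i=(m-i)/(m-1)$).
   Context: For an $m$-candidate positional rule with score vector $w=(w_1,\dots,w_m)$, $1=w_1\ge\cdots\ge w_m=0$, let $\bar w=\frac1m\sum_iw_i$, $\sigma_w^2=\frac1m\sum_iw_i^2-\bar w^2$, $M_w=\{(\lambda,\mu):0\le\lambda\le\mu,\ w_{i+1}\lambda+(1-w_i)\mu\le1,\ i=1,\dots,m-1\}$, and $V_w=\sup\{\lambda(\rho_1(Z)-\bar Z)+\mu(\bar Z-\rho_2(Z)):(\lambda,\mu)\in\sigma_w(\frac{m}{m-1})^{1/2}M_w\}\in[0,\infty]$, where $Z=(Z_1,\dots,Z_m)$ has independent standard normal entries, $\bar Z$ is their mean and $\rho_j(Z)$ the $j$-th largest entry. (Under Impartial Culture, $V_w$ is the limiting distribution of the minimum manipulating coalition size divided by $\sqrt n$.) Let $g_w(v)=\mathbb P(V_w\le v)$. A rule $w$ dominates a rule $w'$ if $g_w(v)\le g_{w'}(v)$ for all $v\ge0$. *)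

From HB Require Import structures.
From mathcomp Require Import all_boot all_order all_algebra.
From mathcomp Require Import all_classical all_reals all_analysis.
Set Implicit Arguments. Unset Strict Implicit. Unset Printing Implicit Defensive.
Import Order.TTheory GRing.Theory Num.Theory.
Local Open Scope classical_set_scope.
Local Open Scope ring_scope.

Section Defs.
Variable R : realType.

(* A score vector w = (w_1,...,w_m) is encoded as w : 'I_m -> R with
   w i = w_{i+1}. *)
Definition positional_rule (m : nat) (w : 'I_m -> R) : Prop :=
  (0 < m)%N /\
  (forall i : 'I_m, val i = 0%N -> w i = 1) /\
  (forall i : 'I_m, val i = m.-1 -> w i = 0) /\
  (forall i j : 'I_m, (i <= j)%N -> w j <= w i).

Definition plurality (m : nat) : 'I_m -> R :=
  fun i => if val i == 0%N then 1 else 0.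
Definition antiplurality (m : nat) : 'I_m -> R :=
  fun i => if val i == m.-1 then 0 else 1.
(* w_i = (m - i)/(m - 1), i.e. for index k = i - 1 : (m - 1 - k)/(m - 1). *)
Definition borda (m : nat) : 'I_m -> R :=
  fun i => (m.-1 - val i)%N%:R / (m.-1)%:R.

Definition wbar (m : nat) (w : 'I_m -> R) : R := (\sum_i w i) / m%:R.
Definition sigma2 (m : nat) (w : 'I_m -> R) : R :=
  (\sum_i w i ^+ 2) / m%:R - wbar w ^+ 2.
Definition sigmaw (m : nat) (w : 'I_m -> R) : R := Num.sqrt (sigma2 w).

Definition Mset (m : nat) (w : 'I_m -> R) : set (R * R) :=
  [set p | 0 <= p.1 /\ p.1 <= p.2 /\
     forall i : 'I_m, forall Hi : ((val i).+1 < m)%N,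
       w (Ordinal Hi) * p.1 + (1 - w i) * p.2 <= 1].

Definition scaledM (m : nat) (w : 'I_m -> R) : set (R * R) :=
  let c := sigmaw w * Num.sqrt (m%:R / (m.-1)%:R) in
  [set p | exists2 q, Mset w q & p = (c * q.1, c * q.2)].

(* j-th largest entry of z (j >= 1), counted with multiplicity *)
Definition rho (m : nat) (j : nat) (z : 'I_m -> R) : R :=
  nth 0 (sort (fun a b => b <= a) [seq z i | i <- enum 'I_m]) j.-1.

Definition zbar (m : nat) (z : 'I_m -> R) : R := (\sum_i z i) / m%:R.

(* the random quantity V_w as a function of the realisation z of Z *)
Definition Vw (m : nat) (w : 'I_m -> R) (z : 'I_m -> R) : \bar R :=
  ereal_sup [set ((p.1 * (rho 1 z - zbar z) + p.2 * (zbar z - rho 2 z))%:E)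
            | p in scaledM w].

Definition iid_std_normal (d : measure_display) (T : measurableType d)
  (P : probability T R) (m : nat) (Z : 'I_m -> T -> R) : Prop :=
  (forall i, measurable_fun setT (Z i)) /\
  (forall i (B : set R), measurable B ->
      P (Z i @^-1` B) = normal_prob 0 1 B) /\
  (forall B : 'I_m -> set R, (forall i, measurable (B i)) ->
      P (\bigcap_(i in [set: 'I_m]) (Z i @^-1` B i)) =
      (\prod_(i < m) P (Z i @^-1` B i))%E).

Definition gw (d : measure_display) (T : measurableType d)
  (P : probability T R) (m : nat) (Z : 'I_m -> T -> R) (w : 'I_m -> R)
  (v : R) : \bar R :=
  P [set t | (Vw w (fun i => Z i t) <= v%:E)%E].

Definition dominates (d : measure_display) (T : measurableType d)
  (P : probability T R) (m : nat) (Z : 'I_m -> T -> R) (w w' : 'I_m -> R)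
  : Prop :=
  forall v : R, 0 <= v -> (gw P Z w v <= gw P Z w' v)%E.

End Defs.
Arguments plurality R m : clear implicits.
Arguments antiplurality R m : clear implicits.
Arguments borda R m : clear implicits.

(* For the three rules involved the supremum defining V_w has a closed form.
   With a = rho_1 - Zbar >= 0 and b = Zbar - rho_2, so that a + b = rho_1 - rho_2 >= 0,
   the objective l a + u b over 0 <= l <= u is at most u (a + b), and at most
   l (a + b) when b <= 0.  For plurality and Borda, M_w has a diagonal point (K, K)
   bounding u (K = 1, resp. (m-1)/(m-2)), hence V_w = c_w K (rho_1 - rho_2) with
   c_w = sigma_w (m/(m-1))^(1/2).  For antiplurality, l <= 1 on M_w and
   {0} x [0, oo) lies in M_w, hence V_w = c_w (rho_1 - rho_2) if Zbar <= rho_2 and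
   V_w = +oo otherwise.  Antiplurality has the same variance as plurality, and
   sigma_Borda K >= sigma_plurality, so for every v the event {V_w <= v} is
   contained in the corresponding plurality event.  Domination thus holds for
   every realisation of Z: only the measurability of the Z_i is used. *)

From HB Require Import structures.
From mathcomp Require Import all_boot all_order all_algebra.
From mathcomp Require Import all_classical all_reals all_analysis.
From mathcomp Require Import ring lra zify.
Set Implicit Arguments. Unset Strict Implicit. Unset Printing Implicit Defensive.
Import Order.TTheory GRing.Theory Num.Theory.
Local Open Scope classical_set_scope.
Local Open Scope ring_scope.

Section OrderStatistics.
Variables (R : realType) (m : nat).
Hypothesis m_gt1 : (1 < m)%N.
Implicit Type z : 'I_m -> R.

Lemma rho_top2 z : exists i j, [/\ i != j, rho 1 z = z i, rho 2 z = z j,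
  forall k, z k <= z i & forall k, k != i -> z k <= z j].
Proof.
set s := sort (fun a b : R => b <= a) [seq z i | i <- enum 'I_m].
have perm_s : perm_eq s [seq z i | i <- enum 'I_m] by rewrite perm_sort.
have s_gt1 : (1 < size s)%N by rewrite (perm_size perm_s) size_map size_enum_ord.
have sorted_s : sorted (fun a b : R => b <= a) s.
  by apply: sort_sorted => a b; exact: le_total.
have ge_trans : transitive (fun a b : R => b <= a).
  by move=> a b c hab hbc; exact: le_trans hbc hab.
rewrite /rho -/s.
case: s => [|x0 [|x1 r]] // in perm_s s_gt1 sorted_s *.
case/andP: sorted_s => x1_le_x0 /(order_path_min ge_trans)/allP r_le_x1 /=.
have /mapP[i _ x0E] : x0 \in [seq z i | i <- enum 'I_m].
  by rewrite -(perm_mem perm_s) mem_head.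
subst x0.
have uniq_enum := enum_uniq 'I_m.
have perm_rem : perm_eq (x1 :: r) [seq z k | k <- rem i (enum 'I_m)].
  rewrite -(perm_cons (z i)) -map_cons; apply: perm_trans perm_s _.
  by apply: perm_map; rewrite perm_to_rem ?mem_enum.
have /mapP[j + x1E] : x1 \in [seq z k | k <- rem i (enum 'I_m)].
  by rewrite -(perm_mem perm_rem) mem_head.
subst x1.
rewrite (mem_rem_uniq _ uniq_enum) inE eq_sym => /andP[ij _].
have other_le k : k != i -> z k <= z j.
  move=> ki; have : z k \in z j :: r.
    by rewrite (perm_mem perm_rem) map_f // (mem_rem_uniq _ uniq_enum) inE ki mem_enum.
  by rewrite inE => /orP[/eqP -> // | /r_le_x1].
exists i, j; split=> // k.
by have [-> // | /other_le k_le_j] := eqVneq k i; exact: le_trans k_le_j x1_le_x0.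
Qed.

Lemma rho2_le_rho1 z : rho 2 z <= rho 1 z.
Proof. by have [i [j [_ -> -> z_le_i _]]] := rho_top2 z. Qed.

Lemma zbar_le_rho1 z : zbar z <= rho 1 z.
Proof.
have [i [j [_ -> _ z_le_i _]]] := rho_top2 z.
rewrite /zbar ler_pdivrMr ?ltr0n ?(ltn_trans _ m_gt1) //.
have -> : z i * m%:R = \sum_(k < m) z i by rewrite sumr_const card_ord mulr_natr.
by apply: ler_sum => k _; exact: z_le_i.
Qed.

Lemma rho_gap_le z u :
  rho 1 z - rho 2 z <= u <-> forall i, exists2 j, j != i & z i - z j <= u.
Proof.
have [i0 [j0 [ij -> -> z_le_i0 z_le_j0]]] := rho_top2 z.
split=> [gap_le i | /(_ i0)[j ji0 gap_le]].
- have [-> | ii0] := eqVneq i i0; first by exists j0; rewrite // eq_sym.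
  exists i0; first by rewrite eq_sym.
  by have := z_le_i0 i; have := z_le_i0 j0; lra.
- by apply: le_trans gap_le; rewrite lerD2l lerN2 z_le_j0.
Qed.

Lemma le_rho2 z c :
  c <= rho 2 z <-> exists i j, [/\ i != j, c <= z i & c <= z j].
Proof.
have [i0 [j0 [ij _ -> z_le_i0 z_le_j0]]] := rho_top2 z.
split=> [c_le | [i [j [ij' c_le_i c_le_j]]]].
  by exists i0, j0; split=> //; exact: le_trans c_le (z_le_i0 j0).
have [ii0 | ii0] := eqVneq i i0.
  by rewrite ii0 eq_sym in ij'; exact: le_trans c_le_j (z_le_j0 _ ij').
exact: le_trans c_le_i (z_le_j0 _ ii0).
Qed.

End OrderStatistics.

Section ObjectiveBounds.
Variable R : realDomainType.
Implicit Types l u a b : R.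

Lemma objective_le_snd l u a b :
  0 <= l <= u -> 0 <= a -> l * a + u * b <= u * (a + b).
Proof. by case/andP=> l_ge0 l_le_u a_ge0; nra. Qed.

Lemma objective_le_fst l u a b : l <= u -> b <= 0 -> l * a + u * b <= l * (a + b).
Proof. by move=> l_le_u b_le0; nra. Qed.

End ObjectiveBounds.

Section ValueOfVw.
Variables (R : realType) (m : nat) (w : 'I_m -> R).

Definition scalew : R := sigmaw w * Num.sqrt (m%:R / (m.-1)%:R).

Lemma scalew_ge0 : 0 <= scalew.
Proof. by rewrite mulr_ge0 ?sqrtr_ge0. Qed.

Lemma Vw_leP z v : (Vw w z <= v%:E)%E <-> forall q, Mset w q ->
  scalew * (q.1 * (rho 1 z - zbar z) + q.2 * (zbar z - rho 2 z)) <= v.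
Proof.
split=> [Vw_le q Mq | obj_le].
- rewrite -lee_fin; apply: le_trans Vw_le; apply: ereal_sup_ubound.
  exists (scalew * q.1, scalew * q.2); first by exists q.
  by congr (_%:E); rewrite /=; ring.
- apply: ge_ereal_sup => _ [_ [q Mq ->] <-] /=.
  by rewrite lee_fin; have := obj_le q Mq; rewrite /scalew; lra.
Qed.

Hypothesis m_gt1 : (1 < m)%N.

Lemma Vw_le_corner (K : R) z v :
  (forall q, Mset w q -> q.2 <= K) -> Mset w (K, K) ->
  (Vw w z <= v%:E)%E <-> scalew * K * (rho 1 z - rho 2 z) <= v.
Proof.
move=> M_le_K MK; rewrite Vw_leP.
have -> : rho 1 z - rho 2 z = (rho 1 z - zbar z) + (zbar z - rho 2 z) by ring.
split=> [obj_le | gap_le q Mq]; first by rewrite -mulrA mulrDr; exact: obj_le MK.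
apply: le_trans gap_le; rewrite -mulrA ler_wpM2l ?scalew_ge0 //.
case: Mq (M_le_K q Mq) => q1_ge0 [q1_le_q2 _] q2_le_K.
apply: le_trans (objective_le_snd _ _ _) _; rewrite ?q1_ge0 ?subr_ge0 ?zbar_le_rho1 //.
by rewrite ler_wpM2r // addrA subrK subr_ge0 rho2_le_rho1.
Qed.

Lemma Vw_le_unbounded z v :
  (forall q, Mset w q -> q.1 <= 1) -> Mset w (1, 1) ->
  (forall N, 0 <= N -> Mset w (0, N)) -> 0 < scalew ->
  (Vw w z <= v%:E)%E <-> zbar z <= rho 2 z /\ scalew * (rho 1 z - rho 2 z) <= v.
Proof.
move=> M_le_1 M11 M0N scalew_gt0; rewrite Vw_leP.
have gapE : rho 1 z - rho 2 z = (rho 1 z - zbar z) + (zbar z - rho 2 z) by ring.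
split=> [obj_le | [zbar_le gap_le] q Mq].
- split; last by have := obj_le _ M11; rewrite /= !mul1r -gapE.
  rewrite leNgt; apply/negP; rewrite -subr_gt0 => b_gt0.
  pose N := (`|v| + 1) / (scalew * (zbar z - rho 2 z)).
  have N_ge0 : 0 <= N by rewrite divr_ge0 ?addr_ge0 // mulr_ge0 // ltW.
  have := obj_le _ (M0N N N_ge0); rewrite /= mul0r add0r.
  have -> : scalew * (N * (zbar z - rho 2 z)) = `|v| + 1.
    by rewrite /N; field; rewrite !gt_eqF.
  by have := ler_norm v; lra.
- apply: le_trans gap_le; rewrite ler_wpM2l ?scalew_ge0 //.
  case: Mq (M_le_1 q Mq) => q1_ge0 [q1_le_q2 _] q1_le1.
  rewrite (le_trans (objective_le_fst _ q1_le_q2 _)) ?subr_le0 // -gapE.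
  by rewrite ler_piMl // subr_ge0 rho2_le_rho1.
Qed.

End ValueOfVw.

Section Measurability.
Variables (R : realType) (d : measure_display) (T : measurableType d).
Variables (m : nat) (Z : 'I_m -> T -> R).
Hypothesis measurable_Z : forall i, measurable_fun setT (Z i).
Hypothesis m_gt1 : (1 < m)%N.

Let measurable_le (f g : T -> R) :
  measurable_fun setT f -> measurable_fun setT g -> measurable [set t | f t <= g t].
Proof. by move=> mf mg; rewrite -[X in measurable X]setTI; exact: measurable_fun_le. Qed.

Lemma measurable_rho_gap_le u :
  measurable [set t | rho 1 (Z^~ t) - rho 2 (Z^~ t) <= u].
Proof.
have -> : [set t | rho 1 (Z^~ t) - rho 2 (Z^~ t) <= u] =
    \bigcap_(i in [set: 'I_m]) \bigcup_(j in [set j | j != i])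
      [set t | Z i t - Z j t <= u].
  apply/funext => t; apply/propext; rewrite /= rho_gap_le //.
  by split=> gap_le i => [_ |]; [exact: gap_le | exact: gap_le i I].
apply: fin_bigcap_measurable => [|i _]; first exact: finite_finset.
apply: fin_bigcup_measurable => [|j _]; first exact: finite_finset.
apply: measurable_le; last exact: measurable_cst.
exact: measurable_realfun.measurable_funB.
Qed.

Lemma measurable_zbar_le_rho2 :
  measurable [set t | zbar (Z^~ t) <= rho 2 (Z^~ t)].
Proof.
have measurable_zbar : measurable_fun setT (fun t => zbar (Z^~ t)).
  apply: measurable_realfun.measurable_funM (measurable_cst _).
  exact: measurable_sum.
have -> : [set t | zbar (Z^~ t) <= rho 2 (Z^~ t)] =
    \bigcup_(i in [set: 'I_m]) \bigcup_(j in [set j | i != j])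
      ([set t | zbar (Z^~ t) <= Z i t] `&` [set t | zbar (Z^~ t) <= Z j t]).
  apply/funext => t; apply/propext; rewrite /= le_rho2 //.
  split=> [[i [j [ij le_i le_j]]] | [i _ [j ij [le_i le_j]]]].
    by exists i => //; exists j.
  by exists i, j.
apply: fin_bigcup_measurable => [|i _]; first exact: finite_finset.
apply: fin_bigcup_measurable => [|j _]; first exact: finite_finset.
by apply: measurableI; apply: measurable_le.
Qed.

Lemma measurable_Vw_le_corner w (K v : R) :
  (forall q, Mset w q -> q.2 <= K) -> Mset w (K, K) -> 0 < scalew w * K ->
  measurable [set t | (Vw w (Z^~ t) <= v%:E)%E].
Proof.
move=> M_le_K MK cK_gt0.
have -> : [set t | (Vw w (Z^~ t) <= v%:E)%E] =
    [set t | rho 1 (Z^~ t) - rho 2 (Z^~ t) <= v / (scalew w * K)].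
  apply/funext => t; apply/propext.
  by rewrite /= (Vw_le_corner _ _ _ M_le_K MK) // ler_pdivlMr // mulrC.
exact: measurable_rho_gap_le.
Qed.

Lemma measurable_Vw_le_unbounded w (v : R) :
  (forall q, Mset w q -> q.1 <= 1) -> Mset w (1, 1) ->
  (forall N, 0 <= N -> Mset w (0, N)) -> 0 < scalew w ->
  measurable [set t | (Vw w (Z^~ t) <= v%:E)%E].
Proof.
move=> M_le_1 M11 M0N c_gt0.
have -> : [set t | (Vw w (Z^~ t) <= v%:E)%E] =
    [set t | zbar (Z^~ t) <= rho 2 (Z^~ t)] `&`
    [set t | rho 1 (Z^~ t) - rho 2 (Z^~ t) <= v / scalew w].
  apply/funext => t; apply/propext.
  by rewrite /= Vw_le_unbounded // ler_pdivlMr // mulrC.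
exact: measurableI measurable_zbar_le_rho2 (measurable_rho_gap_le _).
Qed.

End Measurability.

Lemma dominates_pointwise (R : realType) (d : measure_display)
    (T : measurableType d) (P : probability T R) (m : nat)
    (Z : 'I_m -> T -> R) (w w' : 'I_m -> R) :
  (forall v, measurable [set t | (Vw w (Z^~ t) <= v%:E)%E]) ->
  (forall v, measurable [set t | (Vw w' (Z^~ t) <= v%:E)%E]) ->
  (forall z v, (Vw w z <= v%:E)%E -> (Vw w' z <= v%:E)%E) ->
  dominates P Z w w'.
Proof. by move=> mw mw' Vw_le v _; apply: le_measure; rewrite ?inE // => t /Vw_le. Qed.

Section Variances.
Variable R : realType.

Let natrD_neq0 n (k : R) : 0 < k -> n%:R + k != 0.
Proof. by move=> k_gt0; rewrite gt_eqF // ltr_wpDl. Qed.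

Lemma sigma2_boolean m (w : 'I_m -> R) :
  (forall i, w i ^+ 2 = w i) -> sigma2 w = wbar w * (1 - wbar w).
Proof. by move=> w_sq; rewrite /sigma2 (eq_bigr _ (fun i _ => w_sq i)) -/(wbar w); ring. Qed.

Lemma wbar_plurality n : wbar (plurality R n.+1) = (n.+1)%:R^-1.
Proof. by rewrite /wbar big_ord_recl /plurality /= big1 ?addr0 ?mul1r. Qed.

Lemma wbar_antiplurality n : wbar (antiplurality R n.+1) = 1 - (n.+1)%:R^-1.
Proof.
rewrite /wbar big_ord_recr /antiplurality /= eqxx addr0.
rewrite (eq_bigr (fun _ => 1)) => [|i _]; last by rewrite /= ltn_eqF.
by rewrite sumr_const card_ord -[n.+1]addn1 natrD; field; rewrite natrD_neq0.
Qed.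

Lemma sigma2_plurality n :
  sigma2 (plurality R n.+1) = (n.+1)%:R^-1 * (1 - (n.+1)%:R^-1).
Proof.
rewrite sigma2_boolean ?wbar_plurality // => i.
by rewrite /plurality; case: ifP => _; rewrite ?expr0n ?expr1n.
Qed.

Lemma sigma2_antiplurality n :
  sigma2 (antiplurality R n.+1) = sigma2 (plurality R n.+1).
Proof.
rewrite sigma2_plurality sigma2_boolean ?wbar_antiplurality; first ring.
by move=> i; rewrite /antiplurality; case: ifP => _; rewrite ?expr0n ?expr1n.
Qed.

Lemma sum_rev_ord n (F : nat -> R) :
  \sum_(i < n.+1) F (n - i)%N = \sum_(i < n.+1) F i.
Proof.
rewrite (reindex_inj rev_ord_inj) /=; apply: eq_bigr => i _.
by rewrite subSS subKn // -ltnS.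
Qed.

Lemma sumr_nat n : \sum_(i < n) (i%:R : R) = n%:R * (n%:R - 1) / 2.
Proof.
elim: n => [|n IH]; first by rewrite big_ord0 !mul0r.
by rewrite big_ord_recr /= IH -[n.+1]addn1 natrD; field.
Qed.

Lemma sumr_nat_sqr n :
  \sum_(i < n) (i%:R : R) ^+ 2 = n%:R * (n%:R - 1) * (2 * n%:R - 1) / 6.
Proof.
elim: n => [|n IH]; first by rewrite big_ord0 !mul0r.
by rewrite big_ord_recr /= IH -[n.+1]addn1 natrD; field.
Qed.

Lemma sigma2_borda m : (1 < m)%N ->
  sigma2 (borda R m) = (m%:R + 1) / (12 * (m%:R - 1)).
Proof.
case: m => [|[|n]] // _; rewrite /sigma2 /wbar /borda /=.
under eq_bigr do rewrite expr_div_n.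
rewrite -!mulr_suml (sum_rev_ord _ (fun k => k%:R ^+ 2)) (sum_rev_ord _ (fun k => k%:R)).
rewrite sumr_nat sumr_nat_sqr -[n.+2]addn2 -[n.+1]addn1 !natrD.
by field; rewrite -addrA !natrD_neq0 // subr_gt0 ltr1n.
Qed.

End Variances.

Section Rules.
Variable R : realType.

Lemma positional_rule_Mset11 m (w : 'I_m -> R) : positional_rule w -> Mset w (1, 1).
Proof.
case=> _ [_ [_ w_noninc]]; split=> //; split=> // i Hi /=.
by have := w_noninc i (Ordinal Hi) (leqnSn i); lra.
Qed.

Lemma positional_rule_plurality n : positional_rule (plurality R n.+2).
Proof.
rewrite /positional_rule /plurality; split=> //; split=> [i -> //|].
split=> [i -> //| i j ij].
case: eqP => [j0|_]; case: eqP => [i0|i0] //=; rewrite ?ler01 //.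
by change (nat_of_ord j = 0%N) in j0; change (nat_of_ord i <> 0%N) in i0; lia.
Qed.

Lemma positional_rule_antiplurality n : positional_rule (antiplurality R n.+2).
Proof.
rewrite /positional_rule /antiplurality; split=> //; split=> [i -> //|].
split=> [i ->| i j ij]; first by rewrite eqxx.
have := ltn_ord j.
case: eqP => [j0|j0]; case: eqP => [i0|i0] //=; rewrite ?ler01 //.
by change (nat_of_ord i = n.+1) in i0; change (nat_of_ord j <> n.+1) in j0; lia.
Qed.

Lemma antiplurality_neq_plurality n : antiplurality R n.+3 <> plurality R n.+3.
Proof.
move=> /(congr1 (fun w => w (Ordinal (isT : (1 < n.+3)%N)))).
by rewrite /antiplurality /plurality /= => /eqP; rewrite oner_eq0.
Qed.

Lemma plurality_Mset_snd_le1 n q : Mset (plurality R n.+3) q -> q.2 <= 1.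
Proof.
case=> _ [_ /(_ (Ordinal (isT : (1 < n.+3)%N)) isT)].
by rewrite /plurality /= mul0r subr0 mul1r add0r.
Qed.

Lemma antiplurality_Mset_fst_le1 n q : Mset (antiplurality R n.+3) q -> q.1 <= 1.
Proof.
case=> _ [_ /(_ (Ordinal (isT : (0 < n.+3)%N)) isT)].
by rewrite /antiplurality /= subrr mul0r addr0 mul1r.
Qed.

Lemma antiplurality_Mset0 m N : 0 <= N -> Mset (antiplurality R m) (0, N).
Proof.
move=> N_ge0; split=> //; split=> // i Hi /=.
have i_lt : (i < m.-1)%N by rewrite -ltnS (ltn_predK Hi).
by rewrite /antiplurality (ltn_eqF i_lt) subrr mulr0 mul0r addr0 ler01.
Qed.

Lemma borda_step m (i : 'I_m) (Hi : (i.+1 < m)%N) :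
  borda R m i - borda R m (Ordinal Hi) = (m.-1)%:R^-1.
Proof.
have m1_gt0 : (0 < m.-1)%N by lia.
rewrite /borda /=.
have -> : (m.-1 - i = (m.-1 - i.+1).+1)%N by lia.
by rewrite -addn1 natrD; field; rewrite pnatr_eq0 -lt0n.
Qed.

Lemma borda_Mset_snd_le n q :
  Mset (borda R n.+3) q -> q.2 <= (n.+2)%:R / (n.+1)%:R.
Proof.
case=> _ [_ /(_ (Ordinal (leqW (ltnSn n.+1))) (ltnSn n.+2))].
rewrite /borda /= subnn subSnn mul0r mul0r add0r.
have -> : 1 - 1 / (n.+2)%:R = (n.+1)%:R / (n.+2)%:R :> R.
  by rewrite -[(n.+2)%:R]natr1; field; rewrite nat1r natr1 pnatr_eq0.
by rewrite mulrAC ler_pdivrMr // mul1r ler_pdivlMr // mulrC.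
Qed.

Lemma borda_Mset_corner n :
  let K := (n.+2)%:R / (n.+1)%:R in Mset (borda R n.+3) (K, K).
Proof.
move=> K; split=> /=; first by rewrite divr_ge0.
split=> // i Hi; have := borda_step Hi => /= step.
have -> : borda R n.+3 (Ordinal Hi) = borda R n.+3 i - (n.+2)%:R^-1 by rewrite -step; ring.
by rewrite (_ : _ + _ = 1) // /K -[(n.+2)%:R]natr1; field; rewrite ?nat1r ?natr1 ?pnatr_eq0.
Qed.

End Rules.

Section Scales.
Variable R : realType.

Lemma scalew_antiplurality n :
  scalew (antiplurality R n.+1) = scalew (plurality R n.+1).
Proof. by rewrite /scalew /sigmaw sigma2_antiplurality. Qed.

Lemma scalew_plurality_gt0 n : 0 < scalew (plurality R n.+2).
Proof.
rewrite /scalew /sigmaw sigma2_plurality mulr_gt0 // sqrtr_gt0 ?divr_gt0 //.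
by rewrite mulr_gt0 ?invr_gt0 // subr_gt0 invf_lt1 // ltr1n.
Qed.

Lemma scalew_plurality_le_borda n :
  scalew (plurality R n.+3) <= scalew (borda R n.+3) * ((n.+2)%:R / (n.+1)%:R).
Proof.
set K := (n.+2)%:R / (n.+1)%:R.
have K_ge0 : 0 <= K by rewrite divr_ge0.
have var_borda_ge0 : 0 <= sigma2 (borda R n.+3) by rewrite sigma2_borda // divr_ge0.
have var_le : sigma2 (plurality R n.+3) <= sigma2 (borda R n.+3) * K ^+ 2.
  rewrite sigma2_plurality sigma2_borda // -subr_ge0.
  set x : R := n%:R; have x_ge0 : 0 <= x := ler0n R n.
  have -> : (n.+3%:R + 1) / (12 * (n.+3%:R - 1)) * K ^+ 2 -
      n.+3%:R^-1 * (1 - n.+3%:R^-1) =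
      (x + 2) * (x ^+ 3 - 2 * x ^+ 2 + 9 * x + 24) /
      (12 * (x + 1) ^+ 2 * (x + 3) ^+ 2).
    by rewrite /K /x; field; rewrite -/x !gt_eqF //; lra.
  have cubic_ge0 : 0 <= x ^+ 3 - 2 * x ^+ 2 + 9 * x + 24.
    have : 0 <= x * (x - 1) ^+ 2 by rewrite mulr_ge0 ?sqr_ge0.
    nra.
  apply: divr_ge0; first by rewrite mulr_ge0 // addr_ge0.
  by rewrite mulr_ge0 ?sqr_ge0 // mulr_ge0 ?sqr_ge0.
rewrite /scalew mulrAC ler_wpM2r ?sqrtr_ge0 // /sigmaw -(ger0_norm K_ge0).
by rewrite -sqrtr_sqr -sqrtrM // ler_sqrt ?mulr_ge0 ?sqr_ge0.
Qed.

End Scales.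

Section ThreeRules.
Variables (R : realType) (n : nat).
Let m_gt1 : (1 < n.+3)%N := isT.
Let gap (z : 'I_n.+3 -> R) := rho 1 z - rho 2 z.

Lemma Vw_plurality_le z v :
  (Vw (plurality R n.+3) z <= v%:E)%E <-> scalew (plurality R n.+3) * gap z <= v.
Proof.
rewrite (Vw_le_corner m_gt1 _ _ (@plurality_Mset_snd_le1 R n)) ?mulr1 //.
exact/positional_rule_Mset11/positional_rule_plurality.
Qed.

Lemma Vw_antiplurality_le z v : (Vw (antiplurality R n.+3) z <= v%:E)%E <->
  zbar z <= rho 2 z /\ scalew (plurality R n.+3) * gap z <= v.
Proof.
rewrite -scalew_antiplurality Vw_le_unbounded //.
- exact: antiplurality_Mset_fst_le1.
- exact/positional_rule_Mset11/positional_rule_antiplurality.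
- exact: antiplurality_Mset0.
- by rewrite scalew_antiplurality scalew_plurality_gt0.
Qed.

Lemma Vw_borda_le z v : (Vw (borda R n.+3) z <= v%:E)%E <->
  scalew (borda R n.+3) * ((n.+2)%:R / (n.+1)%:R) * gap z <= v.
Proof. exact: Vw_le_corner (@borda_Mset_snd_le R n) (borda_Mset_corner R n). Qed.

End ThreeRules.

Section Domination.
Variables (R : realType) (d : measure_display) (T : measurableType d).
Variables (P : probability T R) (n : nat) (Z : 'I_n.+3 -> T -> R).
Hypothesis measurable_Z : forall i, measurable_fun setT (Z i).
Let m_gt1 : (1 < n.+3)%N := isT.

Let measurable_Vw_plurality_le v :
  measurable [set t | (Vw (plurality R n.+3) (Z^~ t) <= v%:E)%E].
Proof.
apply: (measurable_Vw_le_corner measurable_Z m_gt1 v (@plurality_Mset_snd_le1 R n)).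
- exact/positional_rule_Mset11/positional_rule_plurality.
- by rewrite mulr1 scalew_plurality_gt0.
Qed.

Lemma antiplurality_dominates_plurality :
  dominates P Z (antiplurality R n.+3) (plurality R n.+3).
Proof.
apply: dominates_pointwise => [v|v|z v].
- apply: (measurable_Vw_le_unbounded measurable_Z m_gt1 v
    (@antiplurality_Mset_fst_le1 R n)).
  + exact/positional_rule_Mset11/positional_rule_antiplurality.
  + exact: antiplurality_Mset0.
  + by rewrite scalew_antiplurality scalew_plurality_gt0.
- exact: measurable_Vw_plurality_le.
- by rewrite Vw_antiplurality_le Vw_plurality_le => -[].
Qed.

Lemma borda_dominates_plurality : dominates P Z (borda R n.+3) (plurality R n.+3).
Proof.
have scalew_le := scalew_plurality_le_borda R n.
apply: dominates_pointwise => [v|v|z v].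
- apply: (measurable_Vw_le_corner measurable_Z m_gt1 v (@borda_Mset_snd_le R n)).
    exact: borda_Mset_corner.
  exact: lt_le_trans (scalew_plurality_gt0 R n.+1) scalew_le.
- exact: measurable_Vw_plurality_le.
- rewrite Vw_borda_le Vw_plurality_le; apply: le_trans.
  by rewrite ler_wpM2r // subr_ge0 rho2_le_rho1.
Qed.

End Domination.

Theorem proposition12 (R : realType) (d : measure_display)
  (T : measurableType d) (P : probability T R) (m : nat)
  (Z : 'I_m -> T -> R) :
  (3 <= m)%N -> iid_std_normal P Z ->
  (exists w : 'I_m -> R, positional_rule w /\ w <> plurality R m /\
     dominates P Z w (plurality R m)) /\
  dominates P Z (antiplurality R m) (plurality R m) /\
  dominates P Z (borda R m) (plurality R m).
Proof.
case: m Z => [|[|[|n]]] Z // _ [measurable_Z _].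
have antiplurality_dominates := antiplurality_dominates_plurality P measurable_Z.
split; last by split; [|exact: borda_dominates_plurality].
exists (antiplurality R n.+3); split; first exact: positional_rule_antiplurality.
by split; first exact: antiplurality_neq_plurality.
Qed.
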